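(* The weight matrices $W_H$, $W_L$ and $W_J$ are irreducible.
   Context: A weight matrix $W$ of size $N$ is reducible if there is a constant invertible matrix $M$ such that $MW(x)M^*$ is block diagonal with at least two blocks of smaller size for all $x$; otherwise irreducible. Classical scalar weights: Hermite $w_b(x)=e^{-x^2+2bx}$ on $\mathbb R$; Laguerre $w_\alpha(x)=e^{-x}x^\alpha$ on $(0,\infty)$, $\alpha>-1$; Jacobi $w_{\alpha,\beta}(x)=(1-x)^\alpha(1+x)^\beta$ on $(-1,1)$, $\alpha,\beta>-1$. Let $N\ge2$, $A=\sum_{j=1}^{\lfloor N/2\rfloor}a_{2j-1}E_{2j-1,2j}+\sum_{j=1}^{\lfloor (N-1)/2\rfloor}a_{2j}E_{2j+1,2j}$ ($E_{s,t}$ matrix units, all $a_j\in\mathbb R\setminus\{0\}$), $T(x)=I+Ax$. $W_H=T\,\mathrm{diag}(w_{b_1},\dots,w_{b_N})\,T^*$ with $b_i$ pairwise distinct reals; $W_L=T\,\mathrm{diag}(w_{\alpha_1},\dots,w_{\alpha_N})\,T^*$ with $\alpha_i-\alpha_j\notin\mathbb Z$ for $i\ne j$; $W_J=T\,\mathrm{diag}(w_{\alpha_1,\beta_1},\dots,w_{\alpha_N,\beta_N})\,T^*$ with, for $i\ne j$, $\alpha_i-\alpha_j\notin\mathbb Z$ or $\beta_i-\beta_j\notin\mathbb Z$, and $\alpha_1+\beta_1=\alpha_j+\beta_j+1+(-1)^j$ for all $j$. *)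

From HB Require Import structures.
From mathcomp Require Import all_boot all_order all_algebra.
From mathcomp Require Import all_classical all_reals.
From mathcomp Require Import all_analysis.
From mathcomp Require Import complex.
Set Implicit Arguments. Unset Strict Implicit. Unset Printing Implicit Defensive.
Import Order.TTheory GRing.Theory Num.Theory.
Local Open Scope ring_scope.

Definition adjmx (R : rcfType) (n : nat) (M : 'M[R[i]]_n) : 'M[R[i]]_n :=
  (map_mx (@conjc R) M)^T.

(* W is reducible if there is a constant invertible
   complex matrix M such that M W(x) M^* is block diagonal with at least two
   blocks of smaller size for all x in the support: i.e. there is a split
   point 0 < k < N with all entries of the off-diagonal blocks equal to 0. *)
Definition reducible (R : rcfType) (N : nat) (I : R -> Prop)
  (W : R -> 'M[R]_N) : Prop :=
  exists M : 'M[R[i]]_N, M \in unitmx /\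
  exists k : nat, (0 < k < N)%N /\
   forall x, I x -> forall i j : 'I_N, (i < k)%N != (j < k)%N ->
     (M *m map_mx (fun r : R => real_complex R r) (W x) *m adjmx M) i j = 0.

Definition irreducible_weight (R : rcfType) (N : nat) (I : R -> Prop)
  (W : R -> 'M[R]_N) : Prop := ~ reducible I W.

(* The matrix A (0-based indices): for 1-based (s,t),
   A_{2j-1,2j} = a_{2j-1},  A_{2j+1,2j} = a_{2j}. *)
Definition Amat (R : pzRingType) (N : nat) (a : nat -> R) : 'M[R]_N :=
  \matrix_(i < N, j < N)
    if ~~ odd i && (j == i.+1 :> nat) then a i.+1
    else if ~~ odd i && (0 < i)%N && (j.+1 == i :> nat) then a (nat_of_ord i)
    else 0.

Definition Tmat (R : pzRingType) (N : nat) (a : nat -> R) (x : R) : 'M[R]_N :=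
  1%:M + x *: Amat N a.

Definition Wmat (R : comPzRingType) (N : nat) (a : nat -> R)
  (w : 'I_N -> R -> R) (x : R) : 'M[R]_N :=
  Tmat N a x *m diag_mx (\row_k w k x) *m (Tmat N a x)^T.

Definition hermite_w (R : realType) (b x : R) : R := expR (- x ^+ 2 + 2 * b * x).
Definition laguerre_w (R : realType) (al x : R) : R := expR (- x) * powR x al.
Definition jacobi_w (R : realType) (al be x : R) : R :=
  powR (1 - x) al * powR (1 + x) be.

Definition is_integer (R : pzRingType) (x : R) : Prop := exists z : int, x = z%:~R.

(* Suppose M W(x) M^* is block diagonal for all x, with row blocks P and ~P.
   Since T(x) = 1 + x A, its (i, j) entry is
     sum_l (M_il + x B_il) w_l(x) conj(M_jl + x B_jl),   B = M A,
   and the classical weights are linearly independent over the polynomials: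
   compare growth at +oo (after x = e^s for Laguerre, and after
   x = (1 - t)/(1 + t) for Jacobi).  So for i in P, j in ~P and every column l,
   row i or row j of both M and B vanishes at l.  This splits the columns into
   classes S, ~S such that M and B map the block structure (P, ~P) to (S, ~S),
   hence A = M^-1 B preserves (S, ~S).  As the nonzero entries of A link every
   index to the next one, S is trivial, and then M has a zero row. *)

From HB Require Import structures.
From mathcomp Require Import all_boot all_order all_algebra.
From mathcomp Require Import all_classical all_reals all_analysis.
From mathcomp Require Import complex.
From mathcomp.algebra_tactics Require Import ring lra.
Set Implicit Arguments. Unset Strict Implicit. Unset Printing Implicit Defensive.
Import Order.TTheory GRing.Theory Num.Theory.
Import numFieldNormedType.Exports.
Local Open Scope classical_set_scope.
Local Open Scope ring_scope.

Section Dominance.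
Variables (R : realType) (I : finType) (disp : Order.disp_t) (K : orderType disp).

Lemma dominated_free (key : I -> K) (g : I -> R -> R) (c : I -> R) :
  injective key ->
  (forall i, \forall x \near +oo, g i x != 0) ->
  (forall i j, (key i < key j)%O -> g i x / g j x @[x --> +oo] --> 0) ->
  (\forall x \near +oo, \sum_i c i * g i x = 0) ->
  forall i, c i = 0.
Proof.
move=> key_inj g_neq0 g_dom sum0 i0; apply/eqP/negPn/negP => ci0.
case: (@arg_maxP _ K I i0 (fun i => c i != 0) key ci0) => m cm m_max.
have lim_cm : \sum_i c i * (g i x / g m x) @[x --> +oo] -->
                \sum_i (if i == m then c m else 0).
  apply: cvg_big => [|i _]; first exact: add_continuous.
  have [->|im] := eqVneq i m.
    apply: cvg_near_cst; near=> x; rewrite divff ?mulr1 //.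
    by near: x; exact: g_neq0.
  have [->|ci] := eqVneq (c i) 0.
    by apply: cvg_near_cst; near=> x; rewrite mul0r.
  have lt_im : (key i < key m)%O.
    by rewrite lt_neqAle (inj_eq key_inj) im; apply: m_max.
  by rewrite -(mulr0 (c i)); apply: cvgM; [exact: cvg_cst | exact: g_dom lt_im].
rewrite -big_mkcond big_pred1_eq /= in lim_cm.
have lim0 : \sum_i c i * (g i x / g m x) @[x --> +oo] --> 0.
  apply: cvg_near_cst; near=> x.
  under eq_bigr do rewrite mulrA.
  by rewrite -mulr_suml (near sum0 x) ?mul0r.
by move/eqP: cm; apply; apply: (cvg_unique _ lim_cm lim0).
Unshelve. all: by end_near. Qed.

End Dominance.

Section ExpPolynomials.
Variable R : realType.

Lemma cvg0_le_divx (f : R -> R) (C : R) :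
  (\forall x \near +oo, `|f x| <= C / x) -> f x @[x --> +oo] --> 0.
Proof.
move=> f_le; apply/cvgr0Pnorm_le => e e0; near=> x.
have x0 : 0 < x by near: x; exact: nbhs_pinfty_gt (num_real 0).
apply: (@le_trans _ _ (C / x)); first by near: x.
by rewrite ler_pdivrMr // mulrC -ler_pdivrMr.
Unshelve. all: by end_near. Qed.

Lemma cvg_exprn_expR_ratio (l l' : R) (j j' : nat) :
  ((l, j) < (l', j') :> (R *l nat))%O ->
  x ^+ j * expR (l * x) / (x ^+ j' * expR (l' * x)) @[x --> +oo] --> 0.
Proof.
rewrite ltxi_pair; have [ll'|//|<-] /= := ltgtP l l' => [_|jj'].
- set d := l' - l; have d0 : 0 < d by rewrite subr_gt0.
  apply: (@cvg0_le_divx _ (j.+1`!%:R / d ^+ j.+1)); near=> x.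
  have x1 : 1 <= x by near: x; exact: nbhs_pinfty_ge (num_real 1).
  have x0 : 0 < x := lt_le_trans ltr01 x1; have x_ge0 := ltW x0.
  have ex_ge : (d * x) ^+ j.+1 / j.+1`!%:R <= expR (d * x).
    apply: le_trans (expR_ge1Dxn j _); last by rewrite mulr_ge0 ?ltW.
    by rewrite lerDr.
  have -> : x ^+ j * expR (l * x) / (x ^+ j' * expR (l' * x)) =
            x ^+ j / expR (d * x) / x ^+ j'.
    by rewrite /d mulrBl expRB; field; rewrite !gt_eqF ?expR_gt0 ?exprn_gt0.
  rewrite ger0_norm; last by rewrite !divr_ge0 ?expR_ge0 ?exprn_ge0.
  rewrite ler_pdivrMr ?exprn_gt0 //.
  apply: le_trans _ (ler_peMr _ (exprn_ege1 j' x1)); last first.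
    by rewrite !divr_ge0 ?exprn_ge0 ?ltW.
  have -> : j.+1`!%:R / d ^+ j.+1 / x = x ^+ j / ((d * x) ^+ j.+1 / j.+1`!%:R).
    rewrite !exprS exprMn; field.
    by rewrite !gt_eqF ?exprn_gt0 ?ltr0n ?fact_gt0.
  rewrite ler_wpM2l ?exprn_ge0 // lef_pV2 ?posrE ?expR_gt0 //.
  by rewrite divr_gt0 ?exprn_gt0 ?mulr_gt0 ?ltr0n ?fact_gt0.
- apply: (@cvg0_le_divx _ 1); near=> x.
  have x1 : 1 <= x by near: x; exact: nbhs_pinfty_ge (num_real 1).
  have x0 : 0 < x := lt_le_trans ltr01 x1.
  have -> : x ^+ j * expR (l * x) / (x ^+ j' * expR (l * x)) = (x ^+ (j' - j))^-1.
    rewrite -{1}(subnK (ltnW jj')) exprD; field.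
    by rewrite !gt_eqF ?expR_gt0 ?exprn_gt0.
  rewrite ger0_norm ?invr_ge0 ?exprn_ge0 ?(ltW x0) //.
  by rewrite div1r lef_pV2 ?posrE ?exprn_gt0 // ler_eXnr // subn_gt0.
Unshelve. all: by end_near. Qed.

Lemma expR_poly_free (I : finType) (la : I -> R) (p : I -> {poly R}) :
  injective la ->
  (\forall x \near +oo, \sum_l (p l).[x] * expR (la l * x) = 0) ->
  forall l, p l = 0.
Proof.
move=> la_inj sum0 l; apply/polyP => j; rewrite coef0.
pose D := (\max_k size (p k))%N.
have size_p k : (size (p k) <= D)%N := leq_bigmax k.
have [jD|Dj] := ltnP j D; last by rewrite nth_default // (leq_trans (size_p l)).
pose key (q : I * 'I_D) : R *l nat := (la q.1, val q.2).
have key_inj : injective key by move=> [k i] [k' i'] [/la_inj -> /val_inj ->].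
apply: (dominated_free key_inj
  (g := fun (q : I * 'I_D) x => x ^+ q.2 * expR (la q.1 * x))
  (c := fun q => (p q.1)`_q.2) _ _ _ (l, Ordinal jD)).
- by move=> q; near=> x; rewrite mulf_neq0 ?gt_eqF ?expR_gt0 ?exprn_gt0.
- by move=> [k i] [k' i']; exact: cvg_exprn_expR_ratio.
- apply: filterS sum0 => x sum0x; rewrite -[in RHS]sum0x.
  under [RHS]eq_bigr => k _ do rewrite (horner_coef_wide _ (size_p k)) mulr_suml.
  by rewrite pair_bigA; apply: eq_bigr => -[k i] _ /=; rewrite mulrA.
Unshelve. all: by end_near. Qed.

End ExpPolynomials.

Definition poly_free (R : realType) (n : nat) (I : R -> Prop) (w : 'I_n -> R -> R) :=
  forall p : 'I_n -> {poly R},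
    (forall x, I x -> \sum_l (p l).[x] * w l x = 0) -> forall l, p l = 0.

Section PolyFree.
Variables (R : realType) (n : nat).
Implicit Types (I : R -> Prop) (w : 'I_n -> R -> R).

Lemma eq_poly_free I w w' :
  (forall l x, I x -> w l x = w' l x) -> poly_free I w -> poly_free I w'.
Proof.
move=> ww' free p sum0; apply: free => x Ix; rewrite -[in RHS](sum0 x Ix).
by apply: eq_bigr => l _; rewrite ww'.
Qed.

Lemma poly_free_mull I w (h : R -> R) :
  (forall x, I x -> h x != 0) -> poly_free I w ->
  poly_free I (fun l x => h x * w l x).
Proof.
move=> h_neq0 free p sum0; apply: free => x Ix.
have : h x * \sum_l (p l).[x] * w l x = 0.
  by rewrite mulr_sumr -[in RHS](sum0 x Ix); apply: eq_bigr => l _; rewrite mulrCA.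
by move/eqP; rewrite mulf_eq0 (negbTE (h_neq0 x Ix)) => /eqP.
Qed.

Lemma poly_free_expR (la : 'I_n -> R) :
  injective la -> poly_free (fun _ => True) (fun l x => expR (la l * x)).
Proof.
move=> la_inj p sum0; apply: (expR_poly_free la_inj).
by apply: nearW => x; exact: sum0.
Qed.

(* x = expR s turns x ^+ j * x `^ al l into expR ((al l + j) * s); these
   exponents are pairwise distinct as the al l are incongruent modulo 1. *)
Lemma poly_free_powR (al : 'I_n -> R) :
  (forall k l, k != l -> ~ is_integer (al k - al l)) ->
  poly_free (fun x => 0 < x) (fun l x => x `^ al l).
Proof.
move=> al_nint p sum0 l; apply/polyP => j; rewrite coef0.
pose D := (\max_k size (p k))%N.
have size_p k : (size (p k) <= D)%N := leq_bigmax k.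
have [jD|Dj] := ltnP j D; last by rewrite nth_default // (leq_trans (size_p l)).
pose shift (q : 'I_n * 'I_D) := al q.1 + (val q.2)%:R.
have shift_inj : injective shift.
  move=> [k i] [k' i'] /=; have [<-|kk'] := eqVneq k k' => eq_sh.
    by move/addrI/eqP: eq_sh; rewrite eqr_nat => /eqP/val_inj /= ->.
  case: (al_nint _ _ kk'); exists (i'%:Z - i%:Z).
  by move: eq_sh; rewrite /shift /= rmorphB /= -!pmulrn; lra.
suff /eqP : ((p l)`_j)%:P = 0 by rewrite polyC_eq0 => /eqP.
apply: (expR_poly_free (p := fun q : 'I_n * 'I_D => ((p q.1)`_q.2)%:P) shift_inj
          _ (l, Ordinal jD)).
apply: nearW => x.
rewrite -[in RHS](sum0 (expR x) (expR_gt0 x)).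
under [RHS]eq_bigr => k _ do rewrite (horner_coef_wide _ (size_p k)) mulr_suml.
rewrite pair_bigA; apply: eq_bigr => -[k i] _ /=.
rewrite hornerC /powR gt_eqF ?expR_gt0 // expRK -expRM_natl -mulrA -expRD.
by congr (_ * expR _); rewrite /shift /=; ring.
Qed.

End PolyFree.

Section CayleyTransform.
Variable F : numFieldType.
Implicit Types (p : {poly F}) (t : F).

Definition cayley_poly (m : nat) (p : {poly F}) : {poly F} :=
  \sum_(j < m) p`_j *: ((1 - 'X) ^+ j * (1 + 'X) ^+ (m - j)).

Lemma horner_cayley_poly m p t : (size p <= m)%N -> 1 + t != 0 ->
  (cayley_poly m p).[t] = (1 + t) ^+ m * p.[(1 - t) / (1 + t)].
Proof.
move=> size_p t1; rewrite horner_sum (horner_coef_wide _ size_p) mulr_sumr.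
apply: eq_bigr => j _; rewrite !hornerE.
have -> : (1 + t) ^+ m = (1 + t) ^+ (m - j) * (1 + t) ^+ j.
  by rewrite -exprD subnK // ltnW.
rewrite expr_div_n /=; field.
by rewrite expf_neq0.
Qed.

Lemma cayley_poly_eq0 m p : (size p <= m)%N -> cayley_poly m p = 0 -> p = 0.
Proof.
move=> size_p cayley0; apply/eqP/negPn/negP => p_neq0.
have root_p x : 0 <= x -> root p x.
  move=> x_ge0; have x1 : 1 + x != 0 by rewrite gt_eqF // ltr_pwDl.
  pose t := (1 - x) / (1 + x).
  have t1 : 1 + t != 0.
    have -> : 1 + t = 2 / (1 + x) by rewrite /t; field.
    by rewrite mulf_neq0 ?invr_eq0 ?pnatr_eq0.
  have := horner_cayley_poly size_p t1; rewrite cayley0 horner0 => /esym/eqP.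
  rewrite mulf_eq0 expf_eq0 (negbTE t1) andbF /=.
  suff -> : (1 - t) / (1 + t) = x by [].
  rewrite /t; field.
  by rewrite x1 (_ : 1 + x + (1 - x) = 2) ?pnatr_eq0 //; ring.
have /negP[] := ltnn (size p).
rewrite -[X in (X < _)%N](size_iota 0) -(size_map (fun i : nat => i%:R : F)).
apply: max_poly_roots p_neq0 _ _.
- by apply/allP => _ /mapP[i _ ->]; exact: root_p.
- by rewrite map_inj_uniq ?iota_uniq // => i i' /eqP; rewrite eqr_nat => /eqP.
Qed.

End CayleyTransform.

Lemma jacobi_w_cayley (R : realType) (al be t : R) : 0 < t ->
  jacobi_w al be ((1 - t) / (1 + t)) =
  2 `^ (al + be) * t `^ al / (1 + t) `^ (al + be).
Proof.
move=> t0; have t1 : 0 < 1 + t by lra.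
have powRE a r : 0 < a -> a `^ r = expR (r * ln a) by move=> a0; rewrite /powR gt_eqF.
rewrite /jacobi_w.
have -> : 1 - (1 - t) / (1 + t) = 2 * t * (1 + t)^-1 by field; rewrite gt_eqF.
have -> : 1 + (1 - t) / (1 + t) = 2 * (1 + t)^-1 by field; rewrite gt_eqF.
have pos2 : (2 : R) \in Num.pos by rewrite posrE ltr0n.
have post : t \in Num.pos by rewrite posrE.
have posVt1 : (1 + t)^-1 \in Num.pos by rewrite posrE invr_gt0.
rewrite !powRE ?mulr_gt0 ?invr_gt0 //.
rewrite !lnM ?posrE ?mulr_gt0 ?invr_gt0 // lnV ?posrE //.
by rewrite -expRN -!expRD; congr expR; ring.
Qed.

(* By jacobi_w_cayley, a relation at x = (1 - t)/(1 + t), multiplied by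
   (1 + t) ^+ m * (1 + t) `^ S, becomes one between the t `^ al k with the
   polynomial coefficients q k below. *)
Lemma poly_free_jacobi (R : realType) (n : nat) (al be : 'I_n -> R) (S : R)
    (K : 'I_n -> nat) :
  (forall k, al k + be k = S - (K k)%:R) ->
  (forall k l, k != l -> ~ is_integer (al k - al l) \/ ~ is_integer (be k - be l)) ->
  poly_free (fun x => -1 < x < 1) (fun k x => jacobi_w (al k) (be k) x).
Proof.
move=> albeE al_be_nint p sum0 l.
have al_nint k k' : k != k' -> ~ is_integer (al k - al k').
  move=> kk' [z alz]; case: (al_be_nint k k' kk') => []; apply; first by exists z.
  exists (- z + (K k')%:Z - (K k)%:Z); rewrite !rmorphD !rmorphN /= -alz -!pmulrn.
  by have := albeE k; have := albeE k'; lra.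
pose m := (\max_k size (p k))%N.
have size_p k : (size (p k) <= m)%N := leq_bigmax k.
pose q k := (2 `^ (S - (K k)%:R) *: (1 + 'X) ^+ K k) * cayley_poly m (p k).
suff /eqP : q l = 0.
  rewrite mulf_eq0 => /orP[|/eqP/(cayley_poly_eq0 (size_p l))//].
  rewrite scaler_eq0 gt_eqF ?powR_gt0 //= expf_eq0 addrC -polyC1.
  by rewrite (negbTE (monic_neq0 (monicXaddC 1))) andbF.
apply: (poly_free_powR al_nint) => t t0.
have t1 : 0 < 1 + t by lra.
have x_itv : -1 < (1 - t) / (1 + t) < 1.
  by rewrite ltr_pdivrMr // ltr_pdivlMr //; apply/andP; split; lra.
transitivity ((1 + t) ^+ m * (1 + t) `^ S * \sum_k (p k).[(1 - t) / (1 + t)] *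
               jacobi_w (al k) (be k) ((1 - t) / (1 + t))); last first.
  by rewrite sum0 ?mulr0.
rewrite mulr_sumr; apply: eq_bigr => k _.
rewrite jacobi_w_cayley // albeE hornerM (horner_cayley_poly (size_p k)) ?gt_eqF //.
rewrite !hornerE (@powRB _ (1 + t)) ?(gt_eqF t1) ?implybT //.
rewrite powR_mulrn ?ltW //=; field.
by rewrite !gt_eqF ?powR_gt0 ?exprn_gt0.
Qed.

Section Complexification.
Variable R : realType.
Local Open Scope complex_scope.

Lemma horner_real_part (f : R[i] -> R) :
  {morph f : u v / u + v} -> (forall c r, f (c * r%:C) = f c * r) ->
  forall (Q : {poly R[i]}) x, f Q.[x%:C] = (map_poly f Q).[x].
Proof.
move=> fD fM Q x; have f0 : f 0 = 0 by rewrite -(mul0r 0%:C) fM mulr0.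
rewrite horner_coef (horner_coef_wide _ (size_poly _ _)) (big_morph f fD f0).
by apply: eq_bigr => j _; rewrite coef_map_id0 // -rmorphXn fM.
Qed.

Lemma poly_free_complex (n : nat) (I : R -> Prop) (w : 'I_n -> R -> R) :
  poly_free I w -> forall P : 'I_n -> {poly R[i]},
  (forall x, I x -> \sum_l (P l).[x%:C] * (w l x)%:C = 0) -> forall l, P l = 0.
Proof.
move=> free P sum0.
have free_part (f : R[i] -> R) l :
    {morph f : u v / u + v} -> (forall c r, f (c * r%:C) = f c * r) ->
    map_poly f (P l) = 0.
  move=> fD fM; have f0 : f 0 = 0 by rewrite -(mul0r 0%:C) fM mulr0.
  apply: (free (fun k => map_poly f (P k))) => x Ix.
  rewrite -[in RHS]f0 -[in RHS](sum0 x Ix) (big_morph f fD f0).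
  by apply: eq_bigr => k _; rewrite fM horner_real_part.
have ReP l : map_poly (@complex.Re R) (P l) = 0.
  by apply: free_part => [[a b] [c d]|[a b] r] //=; rewrite mulr0 subr0.
have ImP l : map_poly (@complex.Im R) (P l) = 0.
  by apply: free_part => [[a b] [c d]|[a b] r] //=; rewrite mulr0 add0r.
move=> l; apply/polyP => j.
move: (ReP l) (ImP l) => /polyP/(_ j) + /polyP/(_ j).
rewrite !coef_map_id0 // !coef0.
by case: (P l)`_j => a b /= -> ->.
Qed.

End Complexification.

Lemma lin_poly_eq0 (F : nzRingType) (u v : F) : u%:P + v *: 'X = 0 -> u = 0 /\ v = 0.
Proof.
move=> /polyP uv0; split; [have := uv0 0%N | have := uv0 1%N];
  by rewrite !coefE /= ?mulr0 ?addr0 ?add0r ?mulr1.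
Qed.

Definition is_blockdiag_mx (V : nmodType) (m n : nat) (P : pred 'I_m)
    (Q : pred 'I_n) (M : 'M[V]_(m, n)) :=
  forall i j, P i != Q j -> M i j = 0.

Lemma is_blockdiag_mxM (F : pzSemiRingType) m n p (P : pred 'I_m) (Q : pred 'I_n)
    (S : pred 'I_p) (M : 'M[F]_(m, n)) (M' : 'M[F]_(n, p)) :
  is_blockdiag_mx P Q M -> is_blockdiag_mx Q S M' -> is_blockdiag_mx P S (M *m M').
Proof.
move=> MPQ M'QS i j PS; rewrite mxE big1 // => r _.
have [PQ|/negPn/eqP PQ] := boolP (P i != Q r); first by rewrite MPQ ?mul0r.
by rewrite M'QS ?mulr0 // -PQ.
Qed.

Lemma is_blockdiag_invmx (F : comUnitRingType) n (P Q : pred 'I_n) (M : 'M[F]_n) :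
  M \in unitmx -> is_blockdiag_mx P Q M -> is_blockdiag_mx Q P (invmx M).
Proof.
pose pmx (P : pred 'I_n) : 'M[F]_n := diag_mx (\row_i (P i)%:R).
have blockdiagE (P' Q' : pred 'I_n) (M' : 'M[F]_n) :
    is_blockdiag_mx P' Q' M' <-> pmx P' *m M' = M' *m pmx Q'.
  split=> [M'PQ|eqM' i j PQ].
    apply/matrixP => i j; rewrite mul_diag_mx mul_mx_diag !mxE.
    by have [->|/M'PQ->] := eqVneq (P' i) (Q' j); rewrite ?mulr0 ?mul0r // mulrC.
  move/matrixP/(_ i j): eqM'; rewrite mul_diag_mx mul_mx_diag !mxE.
  by case: (P' i) (Q' j) PQ => [] [] //= _; rewrite ?mul1r ?mulr0 ?mul0r ?mulr1.
move=> M_unit /blockdiagE MPQ; apply/blockdiagE.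
by rewrite -[RHS](mulmxK M_unit) -(mulmxA (invmx M)) MPQ mulmxA mulVmx // mul1mx.
Qed.

Lemma is_blockdiag_mx_split (V : nmodType) m n (P : pred 'I_m) (M B : 'M[V]_(m, n)) :
  (forall i j l, P i != P j ->
     (M i l == 0) && (B i l == 0) || (M j l == 0) && (B j l == 0)) ->
  exists S : pred 'I_n, is_blockdiag_mx P S M /\ is_blockdiag_mx P S B.
Proof.
move=> sep; pose S l := ~~ [forall i, P i ==> (M i l == 0) && (B i l == 0)].
suff MB0 i l : P i != S l -> (M i l == 0) && (B i l == 0).
  by exists S; split=> i l /MB0/andP[/eqP + /eqP].
rewrite /S; case: (boolP (P i)) => Pi /=; rewrite ?negbK.
  by move=> /forallP/(_ i); rewrite Pi.
move/forallPn => [i0]; rewrite negb_imply => /andP[Pi0 /negbTE nz].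
by have := sep i0 i l; rewrite Pi0 Pi nz => /(_ isT).
Qed.

Lemma unitmx_row_neq0 (F : comUnitRingType) n (M : 'M[F]_n) i :
  M \in unitmx -> ~ (forall j, M i j = 0).
Proof.
move=> M_unit row0; have /matrixP/(_ i i) := mulmxV M_unit.
rewrite !mxE eqxx big1 => [/esym/eqP|j _]; first by rewrite oner_eq0.
by rewrite row0 mul0r.
Qed.

Lemma map_Amat (R R' : pzRingType) (f : {additive R -> R'}) (N : nat) (a : nat -> R) :
  map_mx f (Amat N a) = Amat N (f \o a).
Proof.
apply/matrixP => i j; rewrite !mxE /=.
by case: ifP => _ //; case: ifP => _ //; exact: raddf0.
Qed.

Lemma Amat_blockdiag_trivial (F : pzRingType) (N : nat) (a : nat -> F)
    (S : pred 'I_N) :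
  (forall j, (1 <= j < N)%N -> a j != 0) -> is_blockdiag_mx S S (Amat N a) ->
  forall i j, S i = S j.
Proof.
move=> a_neq0 AS.
have S_succ i (i1 : (i.+1 < N)%N) : S (Ordinal (ltnW i1)) = S (Ordinal i1).
  apply/eqP/negP => /negP neqS.
  (* depending on the parity of i, A_(i,i+1) or A_(i+1,i) is a_(i+1) *)
  have := AS _ _ neqS; rewrite eq_sym in neqS; move: (AS _ _ neqS).
  rewrite !mxE /= eqxx (ltn_eqF (_ : (i < i.+2)%N)) // (gtn_eqF (_ : (i < i.+2)%N)) //.
  rewrite negbK !andbT !andbF /=; have /negbTE ai1 := a_neq0 i.+1 i1.
  by case: (odd i) => /= [/eqP|_ /eqP]; rewrite ai1.
move=> [i iN] j; have N0 : (0 < N)%N := leq_ltn_trans (leq0n i) iN.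
suff S0 l (lN : (l < N)%N) : S (Ordinal lN) = S (Ordinal N0).
  by case: j => j jN; rewrite !S0.
elim: l lN => [|l IH] lN; first by congr S; apply: val_inj.
by rewrite -(S_succ l lN) IH.
Qed.

Section WeightEntries.
Variables (R : rcfType) (N : nat) (a : nat -> R) (w : 'I_N -> R -> R).
Local Open Scope complex_scope.
Local Notation rc := (real_complex R).
Let Ac := map_mx rc (Amat N a).

Lemma Wmat_entry (M : 'M[R[i]]_N) (x : R) (i j : 'I_N) :
  (M *m map_mx (fun r : R => r%:C) (Wmat a w x) *m adjmx M) i j =
  \sum_l (((M i l)%:P + (M *m Ac) i l *: 'X) *
          ((M j l)^*%:P + ((M *m Ac) j l)^* *: 'X)).[x%:C] * (w l x)%:C.
Proof.
have Wc : map_mx rc (Wmat a w x) =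
    (1%:M + x%:C *: Ac) *m diag_mx (\row_l (w l x)%:C) *m (1%:M + x%:C *: Ac)^T.
  rewrite /Wmat /Tmat !map_mxM -map_trmx map_mxD map_mx1 map_mxZ map_diag_mx.
  by congr (_ *m diag_mx _ *m _); apply/rowP => l; rewrite !mxE.
have conj_Ac : map_mx (@conjc R) Ac = Ac.
  by apply/matrixP => p q; rewrite !mxE conjc_real.
rewrite Wc /adjmx !mulmxA -mulmxA -trmx_mul !mulmxDr !mulmx1 -!scalemxAr.
have -> : map_mx (@conjc R) M *m Ac = map_mx (@conjc R) (M *m Ac).
  by rewrite map_mxM conj_Ac.
rewrite mul_mx_diag mxE; apply: eq_bigr => l _.
by rewrite !mxE !hornerE /=; ring.
Qed.

End WeightEntries.

Lemma Wmat_entry_support (R : realType) (N : nat) (a : nat -> R) (I : R -> Prop)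
    (w : 'I_N -> R -> R) (M : 'M[R[i]]_N) (i j : 'I_N) :
  let B := M *m map_mx (real_complex R) (Amat N a) in
  poly_free I w ->
  (forall x, I x ->
     (M *m map_mx (fun r : R => real_complex R r) (Wmat a w x) *m adjmx M) i j = 0) ->
  forall l, (M i l == 0) && (B i l == 0) || (M j l == 0) && (B j l == 0).
Proof.
move=> B w_free Mij0 l.
have : ((M i l)%:P + B i l *: 'X) * ((M j l)^*%C%:P + (B j l)^*%C *: 'X) = 0.
  apply: (poly_free_complex w_free (P := fun l =>
    ((M i l)%:P + B i l *: 'X) * ((M j l)^*%C%:P + (B j l)^*%C *: 'X))) => x Ix.
  by rewrite -(Wmat_entry a w M x i j); exact: Mij0.
move/eqP; rewrite mulf_eq0 => /orP[]/eqP/lin_poly_eq0[].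
  by move=> -> ->; rewrite eqxx.
by move=> /eqP + /eqP; rewrite !conjc_eq0 => /eqP-> /eqP->; rewrite eqxx orbT.
Qed.

Lemma Wmat_irreducible (R : realType) (N : nat) (a : nat -> R) (I : R -> Prop)
    (w : 'I_N -> R -> R) :
  (forall j, (1 <= j < N)%N -> a j != 0) -> poly_free I w ->
  irreducible_weight I (Wmat a w).
Proof.
move=> a_neq0 w_free [M [M_unit [k [/andP[k0 kN] M_block]]]].
pose Ac := map_mx (real_complex R) (Amat N a).
pose top (i : 'I_N) := (i < k)%N.
have [S [MS BS]] :
    exists S, is_blockdiag_mx top S M /\ is_blockdiag_mx top S (M *m Ac).
  apply: is_blockdiag_mx_split => i j l tij.
  exact: (Wmat_entry_support w_free (fun x Ix => M_block x Ix i j tij)).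
have AcS : is_blockdiag_mx S S (Amat N (real_complex R \o a)).
  rewrite -map_Amat -/Ac -(mulKmx M_unit Ac).
  exact: is_blockdiag_mxM (is_blockdiag_invmx M_unit MS) BS.
have S_const : forall i j, S i = S j.
  by apply: Amat_blockdiag_trivial AcS => l /a_neq0; rewrite /= fmorph_eq0.
have [i0 ti0] : exists i0, top i0 = ~~ S (Ordinal kN).
  case: (S (Ordinal kN)); [exists (Ordinal kN) | exists (Ordinal (ltn_trans k0 kN))].
    by rewrite /top /= ltnn.
  by rewrite /top /= k0.
apply: (unitmx_row_neq0 (i := i0) M_unit) => l; apply: MS.
by rewrite ti0 (S_const (Ordinal kN) l); case: (S l).
Qed.

Theorem proposition3p7 (R : realType) (N : nat) (a : nat -> R) :
  (2 <= N)%N ->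
  (forall j : nat, (1 <= j < N)%N -> a j != 0) ->
  (* Hermite *)
  (forall b : 'I_N -> R, injective b ->
     irreducible_weight (fun _ : R => True)
       (Wmat a (fun k x => hermite_w (b k) x))) /\
  (* Laguerre *)
  (forall al : 'I_N -> R, (forall k, -1 < al k) ->
     (forall k l : 'I_N, k != l -> ~ is_integer (al k - al l)) ->
     irreducible_weight (fun x : R => 0 < x)
       (Wmat a (fun k x => laguerre_w (al k) x))) /\
  (* Jacobi *)
  (forall al be : 'I_N -> R, (forall k, -1 < al k) -> (forall k, -1 < be k) ->
     (forall k l : 'I_N, k != l ->
        ~ is_integer (al k - al l) \/ ~ is_integer (be k - be l)) ->
     (forall k0 k : 'I_N, nat_of_ord k0 = 0%N ->
        al k0 + be k0 = al k + be k + 1 + (-1) ^+ (nat_of_ord k).+1) ->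
     irreducible_weight (fun x : R => -1 < x < 1)
       (Wmat a (fun k x => jacobi_w (al k) (be k) x))).
Proof.
move=> N2 a_neq0; split; [|split].
- move=> b b_inj; apply: Wmat_irreducible => //.
  apply: (@eq_poly_free _ _ _ (fun k x => expR (- x ^+ 2) * expR (2 * b k * x))).
    by move=> k x _; rewrite /hermite_w expRD.
  apply: poly_free_mull => [x _|]; first by rewrite gt_eqF ?expR_gt0.
  have two_neq0 : (2 : R) != 0 by rewrite pnatr_eq0.
  by apply: poly_free_expR => k l /(mulfI two_neq0)/b_inj.
- move=> al _ al_nint; apply: Wmat_irreducible => //.
  apply: poly_free_mull => [x _|]; first by rewrite gt_eqF ?expR_gt0.
  exact: poly_free_powR.
- move=> al be _ _ al_be_nint albe0; apply: Wmat_irreducible => //.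
  have N0 : (0 < N)%N by apply: leq_trans N2.
  pose K (k : 'I_N) := if odd k then 2%N else 0%N.
  apply: (@poly_free_jacobi _ _ _ _ (al (Ordinal N0) + be (Ordinal N0)) K) => // k.
  rewrite (albe0 (Ordinal N0) k) // /K -signr_odd /=.
  by case: (odd k); rewrite /= ?expr0 ?expr1; lra.
Qed.
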